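(* Let $\mathrm{Alg}_r(G_1)$ be the category of reachable pointed automata over $\Sigma$ and $\mathcal{C}$ the category of congruences on the monoid $\Sigma^\ast$ (both as described in the context). Define $T:\mathrm{Alg}_r(G_1)\to\mathcal{C}$ on objects by $T(X,\overline{x},\delta)=\ker\delta^\sharp$, and on morphisms by sending a morphism $h:(X,\overline{x},\delta_X)\to(Y,\overline{y},\delta_Y)$ to the inclusion $\ker\delta_X^\sharp\subseteq\ker\delta_Y^\sharp$. Define $M:\mathcal{C}\to\mathrm{Alg}_r(G_1)$ on objects by $M(C)=(\Sigma^\ast/C,\,[\epsilon]_C,\,\sigma_C)$ with $\sigma_C([w]_C)(a)=[wa]_C$ for $w\in\Sigma^\ast$, $a\in\Sigma$, and on a morphism $C\subseteq D$ by the map $[w]_C\mapsto[w]_D$. Then $T$ and $M$ are well-defined functors and $T$ is a right adjoint of $M$ (i.e. $M\dashv T$).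
   Context: $\Sigma$ is a fixed finite alphabet, $\Sigma^\ast$ the free monoid of finite words with empty word $\epsilon$. A pointed automaton is a triple $(X,\overline{x},\delta)$ with $X$ a set (possibly infinite), $\overline{x}\in X$ and $\delta:X\to X^\Sigma$; $\delta$ is extended to $X\to X^{\Sigma^\ast}$ by $\delta(x)(\epsilon)=x$, $\delta(x)(wa)=\delta(\delta(x)(w))(a)$. It is reachable if every $x\in X$ equals $\delta(\overline{x})(u)$ for some $u\in\Sigma^\ast$. A morphism $h:(X,\overline{x},\delta_X)\to(Y,\overline{y},\delta_Y)$ is a map $h:X\to Y$ with $h(\overline{x})=\overline{y}$ and $h(\delta_X(x)(a))=\delta_Y(h(x))(a)$ for all $x\in X,a\in\Sigma$. $\mathrm{Alg}_r(G_1)$ is the category of reachable pointed automata and such morphisms. For a pointed automaton, $\delta^\sharp:\Sigma^\ast\to X^X$ is the monoid homomorphism (into $X^X$ under composition) $\delta^\sharp(u)(x)=\delta(x)(u)$, so $\ker\delta^\sharp=\{(u,v)\in\Sigma^\ast\times\Sigma^\ast\mid \forall x\in X:\ \delta(x)(u)=\delta(x)(v)\}$. $\mathcal{C}$ is the category whose objects are congruences on the monoid $\Sigma^\ast$ and whose morphisms are inclusions (so it is a preorder). *)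

From Stdlib Require Import FunctionalExtensionality PropExtensionality.
From mathcomp Require Import all_boot.
Set Implicit Arguments. Unset Strict Implicit. Unset Printing Implicit Defensive.

Section Automata.
Variable Sigma : finType.

Definition word := seq Sigma.

(* Pointed automaton (X, xbar, delta) with delta : X -> X^Sigma (curried). *)
Record Aut := MkAut { st : Type; init : st; trans : st -> Sigma -> st }.

Definition dstar (A : Aut) (x : st A) (w : word) : st A := foldl (@trans A) x w.

Definition reachable (A : Aut) : Prop :=
  forall x : st A, exists u : word, x = dstar (init A) u.

Definition is_morph (A B : Aut) (h : st A -> st B) : Prop :=
  h (init A) = init B /\ forall (x : st A) (a : Sigma), h (trans x a) = trans (h x) a.

(* kernel of delta^sharp : Sigma^* -> X^X *)
Definition ker (A : Aut) (u v : word) : Prop :=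
  forall x : st A, dstar x u = dstar x v.

(* Congruences on the monoid Sigma^*; morphisms in C are inclusions. *)
Definition is_congruence (R : word -> word -> Prop) : Prop :=
  [/\ (forall u, R u u), (forall u v, R u v -> R v u),
      (forall u v w, R u v -> R v w -> R u w)
    & (forall u u' v v', R u u' -> R v v' -> R (u ++ v) (u' ++ v'))].

Record congr := Congr { crel :> word -> word -> Prop; crel_cong : is_congruence crel }.

Definition incl (R S : word -> word -> Prop) : Prop := forall u v, R u v -> S u v.

(* The quotient Sigma^*/C: the set of equivalence classes [w]_C = {v | C w v}. *)
Definition Mcar (C : congr) : Type := {S : word -> Prop | exists w, S = C w}.

Definition cls (C : congr) (w : word) : Mcar C := exist _ (crel C w) (ex_intro _ w erefl).

Lemma congr_rcons (C : congr) w w' a : C w w' -> C (rcons w a) (rcons w' a).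
Proof.
case: C => R [r s t c] /= H; rewrite -!cats1; exact: c.
Qed.

(* sigma_C([w]_C)(a) := the class {v | exists w in the class, C (w a) v} = [wa]_C *)
Definition Msig_set (C : congr) (S : Mcar C) (a : Sigma) : word -> Prop :=
  fun v => exists w, proj1_sig S = crel C w /\ C (rcons w a) v.

Lemma Msig_ok (C : congr) (S : Mcar C) (a : Sigma) :
  exists w, Msig_set S a = crel C w.
Proof.
case: S => S [w0 HS]; exists (rcons w0 a).
have [r s t c] := crel_cong C.
apply: functional_extensionality => v; apply: propositional_extensionality.
rewrite /Msig_set /=; split.
- case=> w [Hw Hv]; apply: t Hv; apply: congr_rcons.
  by rewrite HS in Hw; rewrite Hw; apply: r.
- by move=> Hv; exists w0; split.
Qed.

Definition Msig (C : congr) (S : Mcar C) (a : Sigma) : Mcar C :=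
  exist _ (Msig_set S a) (Msig_ok S a).

Definition Mobj (C : congr) : Aut := @MkAut (Mcar C) (cls C [::]) (@Msig C).

(* M on a morphism C <= D : [w]_C |-> [w]_D *)
Definition Mmap_set (C D : congr) (S : Mcar C) : word -> Prop :=
  fun v => exists w, proj1_sig S = crel C w /\ D w v.

Lemma Mmap_ok (C D : congr) (H : incl C D) (S : Mcar C) :
  exists w, Mmap_set D S = crel D w.
Proof.
case: S => S [w0 HS]; exists w0.
have [r s t c] := crel_cong D.
apply: functional_extensionality => v; apply: propositional_extensionality.
rewrite /Mmap_set /=; split.
- case=> w [Hw Hv]; apply: t Hv; apply: H.
  have HC : C w0 w by rewrite -HS Hw; apply: (let: And4 r' _ _ _ := crel_cong C in r').
  exact: HC.
- by move=> Hv; exists w0; split.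
Qed.

Definition Mmap (C D : congr) (H : incl C D) (S : Mcar C) : Mcar D :=
  exist _ (Mmap_set D S) (Mmap_ok H S).

End Automata.

From mathcomp Require Import all_boot.
From Stdlib Require Import FunctionalExtensionality PropExtensionality.
From Stdlib Require Import ProofIrrelevance IndefiniteDescription.

(* Reading u ++ v is reading u then v, so ker delta^# is a congruence, and a
   morphism h commutes with reading words; when the codomain is reachable each
   of its states is the h-image of a state reached by the same word, whence
   ker delta_A^# <= ker delta_B^#.
   In M(C) reading u from [w] leads to [wu], so C <= ker of M(C) (the unit),
   and any morphism M(C) -> A must send [w] to delta(xbar)(w): it is unique,
   and it is well defined exactly when C <= ker delta_A^#. *)

Set Implicit Arguments. Unset Strict Implicit. Unset Printing Implicit Defensive.

Section PointedAutomata.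
Variable Sigma : finType.

Lemma dstar_cat (A : Aut Sigma) (x : st A) u v :
  dstar x (u ++ v) = dstar (dstar x u) v.
Proof. exact: foldl_cat. Qed.

Lemma dstar_rcons (A : Aut Sigma) (x : st A) u a :
  dstar x (rcons u a) = trans (dstar x u) a.
Proof. exact: foldl_rcons. Qed.

Lemma morph_dstar (A B : Aut Sigma) (h : st A -> st B) :
  is_morph h -> forall x u, h (dstar x u) = dstar (h x) u.
Proof.
move=> [_ h_trans] x; elim/last_ind => [|u a IHu] //.
by rewrite !dstar_rcons h_trans IHu.
Qed.

Lemma morph_dstar_init (A B : Aut Sigma) (h : st A -> st B) :
  is_morph h -> forall u, h (dstar (init A) u) = dstar (init B) u.
Proof. by move=> hm u; rewrite morph_dstar //; case: hm => ->. Qed.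

Lemma ker_congruence (A : Aut Sigma) : is_congruence (ker A).
Proof.
split=> [u x | u v Huv x | u v w Huv Hvw x | u u' v v' Hu Hv x] //.
- by rewrite Huv Hvw.
- by rewrite !dstar_cat Hu Hv.
Qed.

Lemma morph_ker_incl (A B : Aut Sigma) (h : st A -> st B) :
  reachable B -> is_morph h -> incl (ker A) (ker B).
Proof.
move=> reachB hm u v Huv y; have [w ->] := reachB y.
by rewrite -!dstar_cat -!(morph_dstar_init hm) !dstar_cat Huv.
Qed.

Section Quotient.
Variable C : congr Sigma.

Lemma congr_refl u : C u u.
Proof. by case: (crel_cong C). Qed.

Lemma congr_sym u v : C u v -> C v u.
Proof. by case: (crel_cong C) => _ sym _ _; apply: sym. Qed.

Lemma congr_trans u v w : C u v -> C v w -> C u w.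
Proof. by case: (crel_cong C) => _ _ trans _; apply: trans. Qed.

Lemma congr_cat u u' v v' : C u u' -> C v v' -> C (u ++ v) (u' ++ v').
Proof. by case: (crel_cong C) => _ _ _ cat; apply: cat. Qed.

Lemma Mcar_eq (S T : Mcar C) : proj1_sig S = proj1_sig T -> S = T.
Proof.
by case: S T => S pS [T pT] /= eST; subst T; rewrite (proof_irrelevance _ pS pT).
Qed.

Lemma cls_eqP w w' : cls C w = cls C w' <-> C w w'.
Proof.
split=> [/(congr1 (@proj1_sig _ _)) /= eC | Cww'].
  by rewrite eC; apply: congr_refl.
apply: Mcar_eq; apply: functional_extensionality => v.
apply: propositional_extensionality; split; last exact: congr_trans.
by apply: congr_trans; apply: congr_sym.
Qed.

Definition repr (S : Mcar C) : word Sigma :=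
  proj1_sig (constructive_indefinite_description _ (proj2_sig S)).

Lemma reprK (S : Mcar C) : cls C (repr S) = S.
Proof.
rewrite /repr; case: constructive_indefinite_description => w /= eS.
by apply: Mcar_eq => /=; rewrite eS.
Qed.

Lemma Mcar_cls (S : Mcar C) : exists w, S = cls C w.
Proof. by exists (repr S); rewrite reprK. Qed.

Lemma Msig_cls w a : @trans Sigma (Mobj C) (cls C w) a = cls C (rcons w a).
Proof.
apply: Mcar_eq; apply: functional_extensionality => v.
apply: propositional_extensionality; split=> [[w' [/= eC Cv]] | Cv].
  apply: congr_trans Cv; apply: congr_rcons; apply/cls_eqP/Mcar_eq; exact: esym.
by exists w.
Qed.

Lemma dstar_cls w u : @dstar Sigma (Mobj C) (cls C w) u = cls C (w ++ u).
Proof.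
elim/last_ind: u => [|u a IHu]; first by rewrite cats0.
by rewrite dstar_rcons IHu Msig_cls rcons_cat.
Qed.

Lemma Mobj_reachable : reachable (Mobj C).
Proof. by move=> S; have [w ->] := Mcar_cls S; exists w; rewrite dstar_cls. Qed.

Lemma congr_incl_ker_Mobj : incl C (ker (Mobj C)).
Proof.
move=> u v Cuv S; have [w ->] := Mcar_cls S.
by rewrite !dstar_cls; apply/cls_eqP/congr_cat => //; apply: congr_refl.
Qed.

Lemma morph_Mobj_cls (A : Aut Sigma) (h : Mcar C -> st A) :
  @is_morph Sigma (Mobj C) A h -> forall w, h (cls C w) = dstar (init A) w.
Proof. by move=> hm w; rewrite -(morph_dstar_init hm) /= dstar_cls. Qed.

Lemma morph_Mobj_unique (A : Aut Sigma) (h h' : Mcar C -> st A) :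
  @is_morph Sigma (Mobj C) A h -> @is_morph Sigma (Mobj C) A h' -> h = h'.
Proof.
move=> hm hm'; apply: functional_extensionality => S; have [w ->] := Mcar_cls S.
by rewrite !morph_Mobj_cls.
Qed.

Definition Mlift (A : Aut Sigma) (S : Mcar C) : st A := dstar (init A) (repr S).

Lemma Mlift_cls (A : Aut Sigma) :
  incl C (ker A) -> forall w, Mlift A (cls C w) = dstar (init A) w.
Proof.
move=> CA w; rewrite /Mlift; apply: CA; apply/cls_eqP.
by rewrite reprK.
Qed.

Lemma Mlift_morph (A : Aut Sigma) :
  incl C (ker A) -> @is_morph Sigma (Mobj C) A (Mlift A).
Proof.
move=> CA; split=> [|S a]; first exact: Mlift_cls.
have [w ->] := Mcar_cls S.
by rewrite Msig_cls !Mlift_cls // dstar_rcons.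
Qed.

End Quotient.

Section QuotientMaps.
Variables C D : congr Sigma.
Variable CD : incl C D.

Lemma Mmap_cls w : Mmap CD (cls C w) = cls D w.
Proof.
apply: Mcar_eq; apply: functional_extensionality => v.
apply: propositional_extensionality; split=> [[w' [/= eC Dv]] | Dv].
  apply: congr_trans Dv; apply: CD; apply/cls_eqP/Mcar_eq; exact: esym.
by exists w.
Qed.

Lemma Mmap_morph : @is_morph Sigma (Mobj C) (Mobj D) (Mmap CD).
Proof.
split=> [|S a]; first exact: Mmap_cls.
have [w ->] := Mcar_cls S.
by rewrite Msig_cls !Mmap_cls Msig_cls.
Qed.

End QuotientMaps.

Lemma Mmap_id (C : congr Sigma) (CC : incl C C) (S : Mcar C) : Mmap CC S = S.
Proof. by have [w ->] := Mcar_cls S; rewrite Mmap_cls. Qed.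

Lemma Mmap_comp (C D E : congr Sigma) (CD : incl C D) (DE : incl D E)
    (CE : incl C E) (S : Mcar C) :
  Mmap CE S = Mmap DE (Mmap CD S).
Proof. by have [w ->] := Mcar_cls S; rewrite !Mmap_cls. Qed.

End PointedAutomata.

Theorem mainTheorem1 (Sigma : finType) :
  (* T is well defined on objects: ker delta^# is a congruence on Sigma^* *)
  (forall A : Aut Sigma, reachable A -> is_congruence (ker A)) /\
  (* T is well defined on morphisms: h : A -> B gives ker delta_A^# <= ker delta_B^# *)
  (forall (A B : Aut Sigma) (h : st A -> st B),
      reachable A -> reachable B -> is_morph h -> incl (ker A) (ker B)) /\
  (* M is well defined on objects: M(C) = (Sigma^*/C, [eps]_C, sigma_C) is a
     reachable pointed automaton with sigma_C([w]_C)(a) = [wa]_C *)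
  (forall C : congr Sigma,
      reachable (Mobj C) /\ init (Mobj C) = cls C [::] /\
      (forall (w : seq Sigma) (a : Sigma),
          @trans Sigma (Mobj C) (cls C w) a = cls C (rcons w a))) /\
  (* M is well defined on morphisms: [w]_C |-> [w]_D is a morphism M(C) -> M(D) *)
  (forall (C D : congr Sigma) (H : incl C D),
      @is_morph Sigma (Mobj C) (Mobj D) (Mmap H) /\
      (forall w : seq Sigma, Mmap H (cls C w) = cls D w)) /\
  (* M preserves identities and composition (T does trivially, C being a preorder) *)
  (forall (C : congr Sigma) (H : incl C C) (x : Mcar C), Mmap H x = x) /\
  (forall (C D E : congr Sigma) (H1 : incl C D) (H2 : incl D E) (H3 : incl C E)
          (x : Mcar C), Mmap H3 x = Mmap H2 (Mmap H1 x)) /\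
  (* M -| T : unit eta_C : C <= T(M(C)) ... *)
  (forall C : congr Sigma, incl C (ker (Mobj C))) /\
  (* ... universal property: every C <= T(A) factors through a unique M(C) -> A *)
  (forall (C : congr Sigma) (A : Aut Sigma), reachable A ->
      incl C (ker A) ->
      exists h : Mcar C -> st A,
        @is_morph Sigma (Mobj C) A h /\
        (forall h' : Mcar C -> st A, @is_morph Sigma (Mobj C) A h' -> h' = h)) /\
  (* and conversely a morphism M(C) -> A yields C <= T(A) (hom-set bijection) *)
  (forall (C : congr Sigma) (A : Aut Sigma) (h : Mcar C -> st A), reachable A ->
      @is_morph Sigma (Mobj C) A h -> incl C (ker A)).
Proof.
split; first by move=> A _; apply: ker_congruence.
split; first by move=> A B h _; apply: morph_ker_incl.
split; first by move=> C; split; [apply: Mobj_reachable | split=> //; apply: Msig_cls].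
split; first by move=> C D CD; split; [apply: Mmap_morph | apply: Mmap_cls].
split; first exact: Mmap_id.
split; first exact: Mmap_comp.
split; first exact: congr_incl_ker_Mobj.
split.
  move=> C A _ CA; exists (Mlift A); split; first exact: Mlift_morph.
  by move=> h' hm'; apply: morph_Mobj_unique hm' (Mlift_morph CA).
move=> C A h reachA hm u v Cuv.
exact: morph_ker_incl reachA hm u v (congr_incl_ker_Mobj Cuv).
Qed.
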